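(* Let $d\ge2$, $k\in\mathbb{N}_0$, $Y_k$ a harmonic homogeneous polynomial of degree $k$ on $\mathbb{R}^d$, $\alpha\in\mathbb{R}$, and $H_{\alpha,k}(x)=|x|^{2\alpha}Y_k(x)$ on $\mathbb{R}^d\setminus\{0\}$. If $\alpha\in\mathbb{N}_0$ or $\alpha=1-\frac d2-k+j$ for some $j\in\mathbb{N}_0$, then $H_{\alpha,k}$ is polyharmonic of finite order (i.e. $\Delta^pH_{\alpha,k}=0$ for some $p$). If $\alpha$ is none of these numbers, then for $0<r_0<r_1\le\infty$ the restriction of $H_{\alpha,k}$ to $A(r_0,r_1)$ is polyharmonic of infinite order and type at most $1/r_0$.
   Context: $A(r_0,r_1)=\{x\in\mathbb{R}^d: r_0<|x|<r_1\}$. A function $f:G\to\mathbb{C}$ on a domain $G\subset\mathbb{R}^d$ is polyharmonic of infinite order and type $\tau\ge0$ if $f\in C^\infty(G)$ and for every compact $K\subset G$ and every $\varepsilon>0$ there is $C_{K,\varepsilon}>0$ with $\max_{x\in K}|\Delta^p f(x)|\le C_{K,\varepsilon}(2p)!(\tau+\varepsilon)^{2p}$ for all $p\in\mathbb{N}_0$. ''Type at most $1/r_0$'' means it is of type $1/r_0$ in this sense. *)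

From Stdlib Require Import Reals Lra List Arith ClassicalEpsilon.
Open Scope R_scope.

(* Points of R^d are modelled as sequences x : nat -> R; the space R^d is the
   set of those x with x i = 0 for all i >= d (coordinates 0..d-1). *)
Definition pt := nat -> R.

Definition in_Rd (d : nat) (x : pt) : Prop := forall i, (d <= i)%nat -> x i = 0.

Fixpoint sumd (n : nat) (f : nat -> R) : R :=
  match n with O => 0 | S m => sumd m f + f m end.
Fixpoint prodd (n : nat) (f : nat -> R) : R :=
  match n with O => 1 | S m => prodd m f * f m end.
Fixpoint sumdn (n : nat) (f : nat -> nat) : nat :=
  match n with O => O | S m => (sumdn m f + f m)%nat end.

Definition norm (d : nat) (x : pt) : R := sqrt (sumd d (fun i => x i ^ 2)).
Definition dist (d : nat) (x y : pt) : R := norm d (fun i => x i - y i).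

Definition upd (x : pt) (i : nat) (t : R) : pt :=
  fun j => if Nat.eqb j i then t else x j.

(* i-th partial derivative (the value of the limit, when it exists) *)
Definition pd (f : pt -> R) (i : nat) (x : pt) : R :=
  epsilon (inhabits 0)
    (fun l => derivable_pt_lim (fun t => f (upd x i t)) (x i) l).

Definition lap (d : nat) (f : pt -> R) : pt -> R :=
  fun x => sumd d (fun i => pd (pd f i) i x).
Definition lap_iter (d p : nat) (f : pt -> R) : pt -> R := Nat.iter p (lap d) f.

Definition open_Rd (d : nat) (U : pt -> Prop) : Prop :=
  forall x, U x -> in_Rd d x ->
    exists r, 0 < r /\ forall y, in_Rd d y -> dist d x y < r -> U y.

Definition compact (d : nat) (K : pt -> Prop) : Prop :=
  (forall x, K x -> in_Rd d x) /\
  forall (I : Type) (U : I -> pt -> Prop),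
    (forall i, open_Rd d (U i)) ->
    (forall x, K x -> exists i, U i x) ->
    exists l : list I, forall x, K x -> exists i, In i l /\ U i x.

Definition cont_on (d : nat) (f : pt -> R) (G : pt -> Prop) : Prop :=
  forall x, G x -> forall eps, 0 < eps -> exists delta, 0 < delta /\
    forall y, in_Rd d y -> dist d x y < delta -> Rabs (f y - f x) < eps.
Fixpoint Ck (d n : nat) (f : pt -> R) (G : pt -> Prop) {struct n} : Prop :=
  match n with
  | O => cont_on d f G
  | S m => cont_on d f G /\
           forall i, (i < d)%nat ->
             (forall x, G x -> exists l,
                derivable_pt_lim (fun t => f (upd x i t)) (x i) l) /\
             Ck d m (pd f i) G
  end.
Definition smooth (d : nat) (f : pt -> R) (G : pt -> Prop) : Prop :=
  forall n, Ck d n f G.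

(* complex numbers as pairs (real part, imaginary part) *)
Definition cabs (z : R * R) : R := sqrt (fst z ^ 2 + snd z ^ 2).
Definition re (f : pt -> R * R) : pt -> R := fun x => fst (f x).
Definition im (f : pt -> R * R) : pt -> R := fun x => snd (f x).

Definition polyharmonic_inf (d : nat) (f : pt -> R * R) (G : pt -> Prop)
    (tau : R) : Prop :=
  smooth d (re f) G /\ smooth d (im f) G /\
  forall K, compact d K -> (forall x, K x -> G x) ->
  forall eps, 0 < eps -> exists C, 0 < C /\
    forall (p : nat) x, K x ->
      cabs (lap_iter d p (re f) x, lap_iter d p (im f) x)
        <= C * INR (fact (2 * p)) * (tau + eps) ^ (2 * p).

Definition polyharmonic_fin (d : nat) (f : pt -> R * R) (G : pt -> Prop) : Prop :=
  smooth d (re f) G /\ smooth d (im f) G /\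
  exists p : nat, forall x, G x ->
    lap_iter d p (re f) x = 0 /\ lap_iter d p (im f) x = 0.

Definition hom_poly (d k : nat) (P : pt -> R) : Prop :=
  exists l : list (R * (nat -> nat)),
    (forall m, In m l -> sumdn d (snd m) = k) /\
    forall x, P x = fold_right
      (fun m acc => fst m * prodd d (fun i => x i ^ (snd m i)) + acc) 0 l.

Definition harmonic_hom_poly (d k : nat) (Y : pt -> R * R) : Prop :=
  hom_poly d k (re Y) /\ hom_poly d k (im Y) /\
  forall x, in_Rd d x -> lap d (re Y) x = 0 /\ lap d (im Y) x = 0.

Definition Hak (d : nat) (alpha : R) (Y : pt -> R * R) : pt -> R * R :=
  fun x => (Rpower (norm d x) (2 * alpha) * fst (Y x),
            Rpower (norm d x) (2 * alpha) * snd (Y x)).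

Definition punctured (d : nat) : pt -> Prop :=
  fun x => in_Rd d x /\ norm d x <> 0.

(* annulus A(r0, r1); r1 = None stands for +infinity *)
Definition annulus (d : nat) (r0 : R) (r1 : option R) : pt -> Prop :=
  fun x => in_Rd d x /\ r0 < norm d x /\
    match r1 with Some r => norm d x < r | None => True end.

Definition ext_lt (r0 : R) (r1 : option R) : Prop :=
  match r1 with Some r => r0 < r | None => True end.

Definition exceptional (d k : nat) (alpha : R) : Prop :=
  (exists n : nat, alpha = INR n) \/
  (exists j : nat, alpha = 1 - INR d / 2 - INR k + INR j).

(* Write N(x) = |x|^2.  For a harmonic homogeneous polynomial P of degree k and
   any real b one has, away from the origin,
       Delta (N^b P) = 2b (2b + d - 2 + 2k) N^(b-1) P,
   a consequence of the product rule, Euler's identity sum_i x_i d_i P = k P and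
   Delta P = 0.  Iterating, Delta^p H_{alpha,k} = c_p N^(-p) H_{alpha,k} with
       c_p = prod_{i<p} (2 alpha - 2i) (2 alpha + d - 2 + 2k - 2i).
   If alpha is exceptional one factor vanishes, so H_{alpha,k} is polyharmonic of
   finite order.  In every case |c_p| <= C (2p)! q^(2p) for each q > 1, while on
   the annulus N^(-p) <= r0^(-2p) and H_{alpha,k} is bounded on compact sets;
   this gives infinite order and type at most 1/r0.

   To handle smoothness and iterated derivatives uniformly, the functions
   involved are represented by a small language of expressions (constants,
   coordinates, real powers of N, sums and products) that is closed under
   formal partial differentiation; the formal derivative is shown to be the
   actual one on the punctured space. *)

From Stdlib Require Import Reals Lra Lia Arith List FunctionalExtensionality
  PropExtensionality ClassicalEpsilon.
Open Scope R_scope.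

Lemma sumd_ext n f g : (forall i, (i < n)%nat -> f i = g i) -> sumd n f = sumd n g.
Proof.
  induction n as [|n IH]; intros H; simpl; [reflexivity|].
  rewrite IH by (intros; apply H; lia). rewrite H by lia. reflexivity.
Qed.

Lemma sumd_plus n f g : sumd n (fun i => f i + g i) = sumd n f + sumd n g.
Proof. induction n as [|n IH]; simpl; [ring | rewrite IH; ring]. Qed.

Lemma sumd_scal n c f : sumd n (fun i => c * f i) = c * sumd n f.
Proof. induction n as [|n IH]; simpl; [ring | rewrite IH; ring]. Qed.

Lemma sumd_const n c : sumd n (fun _ => c) = INR n * c.
Proof. induction n as [|n IH]; simpl sumd; [simpl; ring | rewrite IH, S_INR; ring]. Qed.

Lemma sumd_nonneg n f : (forall i, 0 <= f i) -> 0 <= sumd n f.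
Proof.
  intros H. induction n as [|n IH]; simpl; [lra|].
  pose proof (H n). lra.
Qed.

Lemma sumd_ge_term n f i : (forall j, 0 <= f j) -> (i < n)%nat -> f i <= sumd n f.
Proof.
  intros H. induction n as [|n IH]; intros Hi; [lia|]. simpl.
  destruct (Nat.eq_dec i n) as [->|Hne].
  - pose proof (sumd_nonneg n f H). lra.
  - assert (f i <= sumd n f) by (apply IH; lia). pose proof (H n). lra.
Qed.

Lemma sumd_single n f i : (forall j, j <> i -> f j = 0) -> (i < n)%nat -> sumd n f = f i.
Proof.
  intros H. induction n as [|n IH]; intros Hi; [lia|]. simpl.
  destruct (Nat.eq_dec i n) as [->|Hne].
  - rewrite (sumd_ext n f (fun _ => 0)), sumd_const by (intros j Hj; apply H; lia). ring.
  - rewrite IH, (H n) by (auto; lia). ring.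
Qed.

Definition Nf (d : nat) (x : pt) : R := sumd d (fun i => x i ^ 2).

Lemma Nf_nonneg d x : 0 <= Nf d x.
Proof. apply sumd_nonneg. intros; apply pow2_ge_0. Qed.

Lemma upd_eq x i t : upd x i t i = t.
Proof. unfold upd. rewrite Nat.eqb_refl. reflexivity. Qed.

Lemma upd_neq x i t j : j <> i -> upd x i t j = x j.
Proof. intros H. unfold upd. destruct (Nat.eqb_spec j i); congruence. Qed.

Lemma upd_same x i : upd x i (x i) = x.
Proof.
  apply functional_extensionality. intros j. unfold upd.
  destruct (Nat.eqb_spec j i); subst; reflexivity.
Qed.

Lemma in_Rd_upd d x i t : (i < d)%nat -> in_Rd d x -> in_Rd d (upd x i t).
Proof. intros Hi Hx j Hj. rewrite upd_neq by lia. auto. Qed.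

Lemma dist_upd d x i t : (i < d)%nat -> dist d x (upd x i t) = Rabs (t - x i).
Proof.
  intros Hi. unfold dist, norm. rewrite (sumd_single d _ i).
  - rewrite upd_eq, <- sqrt_Rsqr_abs. f_equal. unfold Rsqr. ring.
  - intros j Hj. rewrite upd_neq by auto. ring.
  - exact Hi.
Qed.

Lemma coord_le_dist d x y i : (i < d)%nat -> Rabs (y i - x i) <= dist d x y.
Proof.
  intros Hi. unfold dist, norm. rewrite <- sqrt_Rsqr_abs.
  apply sqrt_le_1; [apply Rle_0_sqr | apply sumd_nonneg; intros; apply pow2_ge_0|].
  replace (Rsqr (y i - x i)) with ((x i - y i) ^ 2) by (unfold Rsqr; ring).
  apply (sumd_ge_term d (fun j => (x j - y j) ^ 2)); [intros; apply pow2_ge_0 | exact Hi].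
Qed.

Lemma punct_iff d x : punctured d x <-> in_Rd d x /\ 0 < Nf d x.
Proof.
  unfold punctured, norm. fold (Nf d x). pose proof (Nf_nonneg d x).
  split; intros [Hx HN]; split; auto.
  - destruct H as [H|H]; auto. exfalso. apply HN. rewrite <- H. apply sqrt_0.
  - apply Rgt_not_eq, sqrt_lt_R0. exact HN.
Qed.

Definition cont_at (d : nat) (F : pt -> R) (x : pt) : Prop :=
  forall eps, 0 < eps -> exists delta, 0 < delta /\
    forall y, in_Rd d y -> dist d x y < delta -> Rabs (F y - F x) < eps.

Lemma cont_const d c x : cont_at d (fun _ => c) x.
Proof.
  intros e He. exists 1. split; [lra|]. intros. rewrite Rminus_diag, Rabs_R0. exact He.
Qed.

Lemma cont_coord d i x : in_Rd d x -> cont_at d (fun y => y i) x.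
Proof.
  intros Hx e He. exists e. split; [exact He|]. intros y Hy Hd.
  destruct (Nat.lt_ge_cases i d) as [Hi|Hi].
  - pose proof (coord_le_dist d x y i Hi). lra.
  - rewrite Hx, Hy by exact Hi. rewrite Rminus_diag, Rabs_R0. exact He.
Qed.

Lemma cont_plus d f g x :
  cont_at d f x -> cont_at d g x -> cont_at d (fun y => f y + g y) x.
Proof.
  intros Hf Hg e He.
  destruct (Hf (e / 2)) as [d1 [Hd1 H1]]; [lra|].
  destruct (Hg (e / 2)) as [d2 [Hd2 H2]]; [lra|].
  exists (Rmin d1 d2). split; [apply Rmin_pos; auto|]. intros y Hy Hd.
  pose proof (Rmin_l d1 d2). pose proof (Rmin_r d1 d2).
  specialize (H1 y Hy ltac:(lra)). specialize (H2 y Hy ltac:(lra)).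
  replace (f y + g y - (f x + g x)) with ((f y - f x) + (g y - g x)) by ring.
  pose proof (Rabs_triang (f y - f x) (g y - g x)). lra.
Qed.

(* The product rule for limits: with |f y - f x|, |g y - g x| < e1 <= 1,
   |f y g y - f x g x| <= e1 (1 + |f x| + |g x|). *)
Lemma cont_mult d f g x :
  cont_at d f x -> cont_at d g x -> cont_at d (fun y => f y * g y) x.
Proof.
  intros Hf Hg e He.
  set (K := 1 + Rabs (f x) + Rabs (g x)).
  assert (HK : 1 <= K) by (unfold K; pose proof (Rabs_pos (f x)); pose proof (Rabs_pos (g x)); lra).
  set (e1 := Rmin 1 (e / K)).
  assert (He1 : 0 < e1) by (apply Rmin_pos; [lra | apply Rdiv_lt_0_compat; lra]).
  assert (He1K : e1 * K <= e).
  { pose proof (Rmin_r 1 (e / K)) as H. fold e1 in H.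
    apply (Rmult_le_compat_r K) in H; [|lra]. unfold Rdiv in H.
    rewrite Rmult_assoc, Rinv_l in H by lra. lra. }
  destruct (Hf e1 He1) as [d1 [Hd1 H1]].
  destruct (Hg e1 He1) as [d2 [Hd2 H2]].
  exists (Rmin d1 d2). split; [apply Rmin_pos; auto|]. intros y Hy Hd.
  assert (He1le : e1 <= 1) by apply Rmin_l.
  pose proof (Rmin_l d1 d2). pose proof (Rmin_r d1 d2).
  specialize (H1 y Hy ltac:(lra)). specialize (H2 y Hy ltac:(lra)).
  replace (f y * g y - f x * g x)
    with ((f y - f x) * (g y - g x) + f x * (g y - g x) + g x * (f y - f x)) by ring.
  pose proof (Rabs_triang ((f y - f x) * (g y - g x) + f x * (g y - g x)) (g x * (f y - f x))).
  pose proof (Rabs_triang ((f y - f x) * (g y - g x)) (f x * (g y - g x))).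
  rewrite !Rabs_mult in *.
  pose proof (Rabs_pos (f y - f x)). pose proof (Rabs_pos (g y - g x)).
  pose proof (Rabs_pos (f x)). pose proof (Rabs_pos (g x)).
  assert (Rabs (f y - f x) * Rabs (g y - g x) < e1 * e1).
  { apply (Rle_lt_trans _ (Rabs (f y - f x) * e1)); [apply Rmult_le_compat_l; lra|].
    apply Rmult_lt_compat_r; lra. }
  assert (Rabs (f x) * Rabs (g y - g x) <= Rabs (f x) * e1) by (apply Rmult_le_compat_l; lra).
  assert (Rabs (g x) * Rabs (f y - f x) <= Rabs (g x) * e1) by (apply Rmult_le_compat_l; lra).
  assert (e1 * e1 <= e1 * 1) by (apply Rmult_le_compat_l; lra).
  unfold K in He1K. lra.
Qed.

Lemma cont_comp d f h x :
  cont_at d f x -> continuity_pt h (f x) -> cont_at d (fun y => h (f y)) x.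
Proof.
  intros Hf Hh e He.
  destruct (Hh e He) as [a [Ha H]].
  destruct (Hf a Ha) as [b [Hb Hfb]].
  exists b. split; [exact Hb|]. intros y Hy Hd.
  destruct (Req_dec (f y) (f x)) as [E|E].
  - rewrite E, Rminus_diag, Rabs_R0. exact He.
  - apply (H (f y)). repeat split; auto. exact (Hfb y Hy Hd).
Qed.

Lemma cont_Nf d x : in_Rd d x -> cont_at d (Nf d) x.
Proof.
  intros Hx. unfold Nf. generalize d at 2. intros n.
  induction n as [|n IH]; cbn [sumd]; [apply cont_const|].
  apply (cont_plus d (fun y => sumd n (fun i => y i ^ 2))); [exact IH|].
  replace (fun y : pt => y n ^ 2) with (fun y : pt => y n * y n)
    by (apply functional_extensionality; intros; ring).
  apply cont_mult; apply cont_coord; exact Hx.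
Qed.

Lemma local_deriv (f g : R -> R) a l r : 0 < r ->
  (forall t, Rabs (t - a) < r -> f t = g t) ->
  derivable_pt_lim f a l -> derivable_pt_lim g a l.
Proof.
  intros Hr Hfg Hf e He. destruct (Hf e He) as [del Hdel].
  assert (Hm : 0 < Rmin del r) by (apply Rmin_pos; [apply cond_pos | exact Hr]).
  exists (mkposreal _ Hm). intros h Hh Hhd. simpl in Hhd.
  pose proof (Rmin_l del r). pose proof (Rmin_r del r).
  rewrite <- !Hfg.
  - apply Hdel; auto. lra.
  - rewrite Rminus_diag, Rabs_R0. exact Hr.
  - replace (a + h - a) with h by ring. lra.
Qed.

Section Locality.
Variables (d : nat) (G : pt -> Prop).
Hypothesis G_open : open_Rd d G.
Hypothesis G_sub : forall x, G x -> in_Rd d x.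

Lemma line_in_open x i : (i < d)%nat -> G x ->
  exists r, 0 < r /\ forall t, Rabs (t - x i) < r -> G (upd x i t).
Proof.
  intros Hi Hx. destruct (G_open x Hx (G_sub x Hx)) as [r [Hr H]].
  exists r. split; [exact Hr|]. intros t Ht.
  apply H; [apply in_Rd_upd; auto | rewrite dist_upd; auto].
Qed.

Lemma pd_local f g i y : (i < d)%nat -> G y ->
  (forall z, G z -> f z = g z) -> pd f i y = pd g i y.
Proof.
  intros Hi Hy Hfg. destruct (line_in_open y i Hi Hy) as [r [Hr Hline]].
  unfold pd. f_equal. apply functional_extensionality. intros l.
  apply propositional_extensionality.
  split; apply (local_deriv _ _ _ _ r Hr); intros t Ht;
    [| symmetry]; apply Hfg, Hline, Ht.
Qed.

Lemma cont_on_local f g : (forall z, G z -> f z = g z) -> cont_on d f G -> cont_on d g G.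
Proof.
  intros Hfg H x Hx e He. destruct (H x Hx e He) as [del [Hdel H1]].
  destruct (G_open x Hx (G_sub x Hx)) as [r [Hr Hn]].
  exists (Rmin del r). split; [apply Rmin_pos; auto|]. intros y Hy Hd.
  pose proof (Rmin_l del r). pose proof (Rmin_r del r).
  rewrite <- (Hfg x Hx), <- (Hfg y) by (apply Hn; auto; lra).
  apply H1; auto; lra.
Qed.

Lemma Ck_local n f g : (forall z, G z -> f z = g z) -> Ck d n f G -> Ck d n g G.
Proof.
  revert f g. induction n as [|n IH]; simpl; intros f g Hfg H.
  - exact (cont_on_local f g Hfg H).
  - destruct H as [Hcont Hder]. split; [exact (cont_on_local f g Hfg Hcont)|].
    intros i Hi. destruct (Hder i Hi) as [Hex HCk]. split.
    + intros x Hx. destruct (Hex x Hx) as [l Hl]. exists l.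
      destruct (line_in_open x i Hi Hx) as [r [Hr Hline]].
      apply (local_deriv (fun t => f (upd x i t)) _ _ _ r Hr); [|exact Hl].
      intros t Ht. apply Hfg, Hline, Ht.
    + apply (IH (pd f i)); [|exact HCk]. intros z Hz. apply pd_local; auto.
Qed.

Lemma lap_local f g x : G x -> (forall z, G z -> f z = g z) -> lap d f x = lap d g x.
Proof.
  intros Hx Hfg. unfold lap. apply sumd_ext. intros i Hi.
  apply pd_local; auto. intros z Hz. apply pd_local; auto.
Qed.

Lemma lap_iter_local p f g x : G x -> (forall z, G z -> f z = g z) ->
  lap_iter d p f x = lap_iter d p g x.
Proof.
  revert x. induction p as [|p IH]; intros x Hx Hfg; simpl; auto.
  apply lap_local; auto.
Qed.

End Locality.

Lemma Ck_mono d n f (G G' : pt -> Prop) :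
  (forall x, G' x -> G x) -> Ck d n f G -> Ck d n f G'.
Proof.
  revert f. induction n as [|n IH]; simpl; intros f HG H.
  - intros x Hx. apply H, HG, Hx.
  - destruct H as [Hcont Hder]. split; [intros x Hx; apply Hcont, HG, Hx|].
    intros i Hi. destruct (Hder i Hi) as [Hex HCk].
    split; [intros x Hx; apply Hex, HG, Hx | apply IH; auto].
Qed.

Lemma punctured_sub d x : punctured d x -> in_Rd d x.
Proof. intros [Hx _]. exact Hx. Qed.

Lemma punctured_open d : open_Rd d (punctured d).
Proof.
  intros x Hx _. apply punct_iff in Hx. destruct Hx as [Hx HN].
  destruct (cont_Nf d x Hx (Nf d x) HN) as [r [Hr H]]. exists r. split; [exact Hr|].
  intros y Hy Hd. apply punct_iff. split; [exact Hy|].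
  specialize (H y Hy Hd). apply Rabs_def2 in H. lra.
Qed.

Lemma pd_of_deriv f i x l :
  derivable_pt_lim (fun t => f (upd x i t)) (x i) l -> pd f i x = l.
Proof.
  intros H. unfold pd.
  apply (uniqueness_limite _ _ _ _
           (epsilon_spec (inhabits 0) _ (ex_intro _ l H)) H).
Qed.

Inductive expr : Type :=
| Cst (c : R)
| Crd (i : nat)
| Npow (b : R)
| Add (e1 e2 : expr)
| Mul (e1 e2 : expr).

Fixpoint eval (d : nat) (e : expr) (x : pt) : R :=
  match e with
  | Cst c => c
  | Crd i => x i
  | Npow b => Rpower (Nf d x) b
  | Add e1 e2 => eval d e1 x + eval d e2 x
  | Mul e1 e2 => eval d e1 x * eval d e2 x
  end.

Fixpoint deriv (i : nat) (e : expr) : expr :=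
  match e with
  | Cst _ => Cst 0
  | Crd j => Cst (if Nat.eqb j i then 1 else 0)
  | Npow b => Mul (Cst (2 * b)) (Mul (Crd i) (Npow (b - 1)))
  | Add e1 e2 => Add (deriv i e1) (deriv i e2)
  | Mul e1 e2 => Add (Mul (deriv i e1) e2) (Mul e1 (deriv i e2))
  end.

Lemma sumsq_upd_deriv n x i :
  derivable_pt_lim (fun t => sumd n (fun j => upd x i t j ^ 2)) (x i)
    (if Nat.ltb i n then 2 * x i else 0).
Proof.
  induction n as [|n IH]; simpl; [apply derivable_pt_lim_const|].
  replace (if Nat.ltb i (S n) then 2 * x i else 0) with
    ((if Nat.ltb i n then 2 * x i else 0) + (if Nat.eqb n i then 2 * x i else 0))
    by (destruct (Nat.ltb_spec i n), (Nat.ltb_spec i (S n)), (Nat.eqb_spec n i);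
        try lia; ring).
  apply (derivable_pt_lim_plus _ (fun t => upd x i t n ^ 2)); [exact IH|].
  unfold upd. destruct (Nat.eqb_spec n i) as [->|Hne]; [|apply derivable_pt_lim_const].
  replace (2 * x i) with (INR 2 * x i ^ (2 - 1)) by (simpl; ring).
  apply derivable_pt_lim_pow.
Qed.

Lemma eval_deriv d e x i : (i < d)%nat -> 0 < Nf d x ->
  derivable_pt_lim (fun t => eval d e (upd x i t)) (x i) (eval d (deriv i e) x).
Proof.
  intros Hi HN. induction e as [c|j|b|e1 IH1 e2 IH2|e1 IH1 e2 IH2]; simpl.
  - apply derivable_pt_lim_const.
  - unfold upd. destruct (Nat.eqb_spec j i);
      [apply derivable_pt_lim_id | apply derivable_pt_lim_const].
  - pose proof (sumsq_upd_deriv d x i) as HNd.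
    destruct (Nat.ltb_spec i d); [|lia].
    assert (HN' : 0 < sumd d (fun j => upd x i (x i) j ^ 2)) by (rewrite upd_same; exact HN).
    pose proof (derivable_pt_lim_comp _ _ _ _ _ HNd (derivable_pt_lim_power _ b HN')) as Hcomp.
    unfold comp in Hcomp. rewrite upd_same in Hcomp. fold (Nf d x) in Hcomp.
    replace (2 * b * (x i * Rpower (Nf d x) (b - 1)))
      with (b * Rpower (Nf d x) (b - 1) * (2 * x i)) by ring.
    exact Hcomp.
  - exact (derivable_pt_lim_plus _ _ _ _ _ IH1 IH2).
  - pose proof (derivable_pt_lim_mult _ _ _ _ _ IH1 IH2) as H.
    cbv beta in H. rewrite upd_same in H. exact H.
Qed.

Lemma cont_eval d e x : in_Rd d x -> 0 < Nf d x -> cont_at d (eval d e) x.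
Proof.
  intros Hx HN. induction e; simpl.
  - apply cont_const.
  - apply cont_coord, Hx.
  - apply (cont_comp d (Nf d) (fun z => Rpower z b)); [apply cont_Nf, Hx|].
    apply derivable_continuous_pt. exists (b * Rpower (Nf d x) (b - 1)).
    apply derivable_pt_lim_power, HN.
  - apply cont_plus; assumption.
  - apply cont_mult; assumption.
Qed.

Lemma pd_eval d e i x : (i < d)%nat -> punctured d x ->
  pd (eval d e) i x = eval d (deriv i e) x.
Proof.
  intros Hi Hx. apply punct_iff in Hx. apply pd_of_deriv, eval_deriv; tauto.
Qed.

Lemma Ck_eval d n e : Ck d n (eval d e) (punctured d).
Proof.
  revert e. induction n as [|n IH]; simpl; intros e.
  - intros x Hx. apply punct_iff in Hx. apply cont_eval; tauto.
  - split; [intros x Hx; apply punct_iff in Hx; apply cont_eval; tauto|].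
    intros i Hi. split.
    + intros x Hx. apply punct_iff in Hx. exists (eval d (deriv i e) x).
      apply eval_deriv; tauto.
    + apply (Ck_local d (punctured d) (punctured_open d) (punctured_sub d) n
               (eval d (deriv i e))); [|apply IH].
      intros z Hz. symmetry. apply pd_eval; assumption.
Qed.

Lemma lap_eval d e x : punctured d x ->
  lap d (eval d e) x = sumd d (fun i => eval d (deriv i (deriv i e)) x).
Proof.
  intros Hx. unfold lap. apply sumd_ext. intros i Hi.
  rewrite (pd_local d (punctured d) (punctured_open d) (punctured_sub d)
             (pd (eval d e) i) (eval d (deriv i e))); auto.
  - apply pd_eval; assumption.
  - intros z Hz. apply pd_eval; assumption.
Qed.

Lemma lap_radial_factor d P c b k x : punctured d x ->
  sumd d (fun i => x i * eval d (deriv i P) x) = k * eval d P x ->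
  sumd d (fun i => eval d (deriv i (deriv i P)) x) = 0 ->
  sumd d (fun i => eval d (deriv i (deriv i (Mul (Cst c) (Mul (Npow b) P)))) x) =
  c * (2 * b * (2 * b + INR d - 2 + 2 * k)) * (Rpower (Nf d x) (b - 1) * eval d P x).
Proof.
  intros Hx Heul Hharm. apply punct_iff in Hx. destruct Hx as [_ HN].
  set (n := Nf d x). set (R0 := Rpower n b). set (R1 := Rpower n (b - 1)).
  set (R2 := Rpower n (b - 1 - 1)). set (Pv := eval d P x).
  assert (HR2 : R2 * n = R1).
  { unfold R2, R1. rewrite <- (Rpower_1 n) at 2 by exact HN.
    rewrite <- Rpower_plus. f_equal. ring. }
  (* d_i^2 (c N^b P) = 2cb N^(b-1) P + 4cb(b-1) N^(b-2) x_i^2 P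
                       + 4cb N^(b-1) x_i d_i P + c N^b d_i^2 P *)
  rewrite (sumd_ext d _ (fun i => (c * 2 * b * R1 * Pv) * 1
       + (c * 2 * b * 2 * (b - 1) * R2 * Pv) * (x i ^ 2)
       + (c * 4 * b * R1) * (x i * eval d (deriv i P) x)
       + (c * R0) * eval d (deriv i (deriv i P)) x)).
  2:{ intros i Hi. simpl. rewrite Nat.eqb_refl. unfold R0, R1, R2, n, Pv. ring. }
  rewrite !sumd_plus, !sumd_scal, sumd_const, Heul, Hharm. fold (Nf d x) n.
  rewrite <- HR2. unfold Pv. ring.
Qed.

(* The constants c_p of Delta^p (N^alpha P) = c_p N^(alpha - p) P. *)
Definition cp (d : nat) (k al : R) (p : nat) : R :=
  prodd p (fun i => (2 * al - 2 * INR i) * (2 * al + INR d - 2 + 2 * k - 2 * INR i)).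

Lemma lap_iter_radial d P al k :
  (forall x, punctured d x -> sumd d (fun i => x i * eval d (deriv i P) x) = k * eval d P x) ->
  (forall x, punctured d x -> sumd d (fun i => eval d (deriv i (deriv i P)) x) = 0) ->
  forall p x, punctured d x ->
    lap_iter d p (eval d (Mul (Npow al) P)) x =
    cp d k al p * (Rpower (Nf d x) (al - INR p) * eval d P x).
Proof.
  intros Heul Hharm p. induction p as [|p IH]; intros x Hx.
  - unfold lap_iter, cp. simpl. rewrite Rminus_0_r. ring.
  - change (lap d (lap_iter d p (eval d (Mul (Npow al) P))) x =
            cp d k al (S p) * (Rpower (Nf d x) (al - INR (S p)) * eval d P x)).
    rewrite (lap_local d (punctured d) (punctured_open d) (punctured_sub d) _
               (eval d (Mul (Cst (cp d k al p)) (Mul (Npow (al - INR p)) P))))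
      by (auto; intros z Hz; rewrite IH by exact Hz; reflexivity).
    rewrite lap_eval, (lap_radial_factor d P _ _ k) by auto.
    unfold cp. simpl prodd. rewrite S_INR.
    replace (al - (INR p + 1)) with (al - INR p - 1) by ring. ring.
Qed.

Fixpoint powe (e : expr) (a : nat) : expr :=
  match a with O => Cst 1 | S a' => Mul (powe e a') e end.

Fixpoint mon (n : nat) (m : nat -> nat) : expr :=
  match n with O => Cst 1 | S n' => Mul (mon n' m) (powe (Crd n') (m n')) end.

Definition poly_expr (d : nat) (l : list (R * (nat -> nat))) : expr :=
  fold_right (fun mm acc => Add (Mul (Cst (fst mm)) (mon d (snd mm))) acc) (Cst 0) l.

Lemma eval_powe d e a x : eval d (powe e a) x = eval d e x ^ a.
Proof. induction a as [|a IH]; simpl; [reflexivity | rewrite IH; ring]. Qed.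

Lemma eval_mon d n m x : eval d (mon n m) x = prodd n (fun i => x i ^ m i).
Proof. induction n as [|n IH]; simpl; [reflexivity | rewrite IH, eval_powe; reflexivity]. Qed.

Lemma eval_poly_expr d l x : eval d (poly_expr d l) x =
  fold_right (fun m acc => fst m * prodd d (fun i => x i ^ (snd m i)) + acc) 0 l.
Proof. induction l as [|mm l IH]; simpl; [reflexivity | rewrite IH, eval_mon; reflexivity]. Qed.

Definition euler (d : nat) (e : expr) (k : R) : Prop :=
  forall x, sumd d (fun i => x i * eval d (deriv i e) x) = k * eval d e x.

Lemma euler_cst d c : euler d (Cst c) 0.
Proof.
  intros x. simpl. rewrite (sumd_ext d _ (fun i => 0 * x i)) by (intros; ring).
  rewrite sumd_scal. ring.
Qed.

Lemma euler_zero d k : euler d (Cst 0) k.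
Proof. intros x. pose proof (euler_cst d 0 x) as H. simpl in *. rewrite H. ring. Qed.

Lemma euler_crd d j : (j < d)%nat -> euler d (Crd j) 1.
Proof.
  intros Hj x. simpl. rewrite (sumd_single d _ j); [rewrite Nat.eqb_refl; ring | | exact Hj].
  intros i Hi. destruct (Nat.eqb_spec j i); [congruence | ring].
Qed.

Lemma euler_add d e1 e2 k : euler d e1 k -> euler d e2 k -> euler d (Add e1 e2) k.
Proof.
  intros H1 H2 x. simpl.
  rewrite (sumd_ext d _ (fun i => x i * eval d (deriv i e1) x + x i * eval d (deriv i e2) x))
    by (intros; ring).
  rewrite sumd_plus, H1, H2. ring.
Qed.

Lemma euler_mul d e1 e2 k1 k2 :
  euler d e1 k1 -> euler d e2 k2 -> euler d (Mul e1 e2) (k1 + k2).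
Proof.
  intros H1 H2 x. simpl.
  rewrite (sumd_ext d _ (fun i => eval d e2 x * (x i * eval d (deriv i e1) x)
                               + eval d e1 x * (x i * eval d (deriv i e2) x)))
    by (intros; ring).
  rewrite sumd_plus, !sumd_scal, H1, H2. ring.
Qed.

Lemma euler_powe d e k a : euler d e k -> euler d (powe e a) (INR a * k).
Proof.
  intros H. induction a as [|a IH]; simpl powe.
  - rewrite Rmult_0_l. apply euler_cst.
  - rewrite S_INR, Rmult_plus_distr_r, Rmult_1_l. apply euler_mul; assumption.
Qed.

Lemma euler_mon d n m : (n <= d)%nat -> euler d (mon n m) (INR (sumdn n m)).
Proof.
  induction n as [|n IH]; intros Hn; simpl; [apply euler_cst|].
  rewrite plus_INR. apply euler_mul; [apply IH; lia|].
  rewrite <- (Rmult_1_r (INR (m n))). apply euler_powe, euler_crd. lia.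
Qed.

Lemma euler_poly_expr d k l : (forall mm, In mm l -> sumdn d (snd mm) = k) ->
  euler d (poly_expr d l) (INR k).
Proof.
  induction l as [|mm l IH]; intros H; simpl; [apply euler_zero|].
  apply euler_add; [|apply IH; intros; apply H; simpl; auto].
  rewrite <- (Rplus_0_l (INR k)). apply euler_mul; [apply euler_cst|].
  rewrite <- (H mm) by (simpl; auto). apply euler_mon; auto.
Qed.

Lemma harmonic_poly_expr d k (f : pt -> R) :
  hom_poly d k f -> (forall x, in_Rd d x -> lap d f x = 0) ->
  exists P, (forall x, f x = eval d P x) /\ euler d P (INR k) /\
    (forall x, punctured d x -> sumd d (fun i => eval d (deriv i (deriv i P)) x) = 0).
Proof.
  intros [l [Hdeg Hf]] Hlap. exists (poly_expr d l).
  assert (Hfe : forall x, f x = eval d (poly_expr d l) x)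
    by (intros; rewrite eval_poly_expr; auto).
  split; [exact Hfe|]. split; [apply euler_poly_expr; exact Hdeg|].
  intros x Hx. rewrite <- lap_eval by exact Hx. rewrite <- (Hlap x (punctured_sub d x Hx)).
  apply (lap_local d (punctured d) (punctured_open d) (punctured_sub d)); auto.
Qed.

Lemma radial_harmonic_eigen d k al (f : pt -> R) :
  hom_poly d k f -> (forall x, in_Rd d x -> lap d f x = 0) ->
  smooth d (fun x => Rpower (norm d x) (2 * al) * f x) (punctured d) /\
  forall p x, punctured d x ->
    lap_iter d p (fun x => Rpower (norm d x) (2 * al) * f x) x =
    cp d (INR k) al p * (Rpower (norm d x) (2 * al) * f x) / Nf d x ^ p.
Proof.
  intros Hhom Hlap.
  destruct (harmonic_poly_expr d k f Hhom Hlap) as [P [HfP [Heul Hharm]]].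
  assert (Hg : forall x, punctured d x ->
            eval d (Mul (Npow al) P) x = Rpower (norm d x) (2 * al) * f x).
  { intros x Hx. apply punct_iff in Hx. destruct Hx as [_ HN].
    simpl. rewrite HfP. f_equal. unfold norm. fold (Nf d x).
    rewrite <- Rpower_sqrt, Rpower_mult by exact HN. f_equal. field. }
  split.
  - intros n. apply (Ck_local d _ (punctured_open d) (punctured_sub d) n _ _ Hg), Ck_eval.
  - intros p x Hx.
    rewrite <- (lap_iter_local d _ (punctured_open d) (punctured_sub d) p _ _ x Hx Hg).
    rewrite (lap_iter_radial d P al (INR k)) by auto.
    rewrite <- Hg by exact Hx. simpl.
    apply punct_iff in Hx. destruct Hx as [_ HN].
    unfold Rminus. rewrite Rpower_plus, Rpower_Ropp, Rpower_pow by exact HN.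
    field. apply pow_nonzero. lra.
Qed.

Lemma prodd_zero p f i : (i < p)%nat -> f i = 0 -> prodd p f = 0.
Proof.
  induction p as [|p IH]; intros Hi H; [lia|]. simpl.
  destruct (Nat.eq_dec i p) as [->|Hne]; [rewrite H | rewrite IH by (auto; lia)]; ring.
Qed.

Lemma cp_exceptional d k al : exceptional d k al -> exists p, cp d (INR k) al p = 0.
Proof.
  intros [[n Hn]|[j Hj]].
  - exists (S n). apply (prodd_zero _ _ n); [lia|]. rewrite Hn. ring.
  - exists (S j). apply (prodd_zero _ _ j); [lia|]. rewrite Hj. field.
Qed.

Lemma div_nonneg x y : 0 <= x -> 0 < y -> 0 <= x / y.
Proof. intros Hx Hy. apply Rmult_le_pos; [exact Hx | left; apply Rinv_0_lt_compat, Hy]. Qed.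

Lemma eventually_dominated (T F : nat -> R) I0 :
  (forall p, 0 <= T p) -> (forall p, 0 < F p) ->
  (forall p, (I0 <= p)%nat -> T (S p) * F p <= T p * F (S p)) ->
  exists C, 0 < C /\ forall p, T p <= C * F p.
Proof.
  intros HT HF Hstep. set (Q := fun p => T p / F p).
  assert (HQ : forall p, 0 <= Q p) by (intros; apply div_nonneg; auto).
  assert (Hdecr : forall m, Q (I0 + m)%nat <= Q I0).
  { induction m as [|m IH]; [rewrite Nat.add_0_r; lra|].
    apply (Rle_trans _ (Q (I0 + m)%nat)); [|exact IH].
    rewrite Nat.add_succ_r. unfold Q.
    pose proof (HF (I0 + m)%nat). pose proof (HF (S (I0 + m))).
    apply Rmult_le_reg_r with (F (S (I0 + m)) * F (I0 + m)%nat); [nra|].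
    field_simplify; [|lra|lra]. rewrite (Rmult_comm (F _)). apply Hstep. lia. }
  set (C := 1 + sumd (S I0) Q).
  assert (HQC : forall p, Q p <= C).
  { intros p. pose proof (sumd_nonneg (S I0) Q HQ).
    destruct (Nat.le_gt_cases p I0) as [Hp|Hp].
    - pose proof (sumd_ge_term (S I0) Q p HQ ltac:(lia)). unfold C. lra.
    - replace p with (I0 + (p - I0))%nat by lia.
      pose proof (sumd_ge_term (S I0) Q I0 HQ ltac:(lia)). pose proof (Hdecr (p - I0)%nat).
      unfold C. lra. }
  exists C. split; [pose proof (sumd_nonneg (S I0) Q HQ); unfold C; lra|].
  intros p. specialize (HQC p). unfold Q in HQC. pose proof (HF p).
  apply (Rmult_le_compat_r (F p)) in HQC; [|lra].
  unfold Rdiv in HQC. rewrite Rmult_assoc, Rinv_l in HQC by lra. lra.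
Qed.

Lemma fact_double_succ p :
  INR (fact (2 * S p)) = INR (fact (2 * p)) * ((2 * INR p + 1) * (2 * INR p + 2)).
Proof.
  replace (2 * S p)%nat with (S (S (2 * p))) by lia.
  change (fact (S (S (2 * p)))) with (S (S (2 * p)) * (S (2 * p) * fact (2 * p)))%nat.
  rewrite !mult_INR, !S_INR, mult_INR. simpl (INR 2). ring.
Qed.

(* Once P is large, (a - 2P)(b - 2P) is at most the ratio (2P+1)(2P+2) q^2
   between consecutive terms of (2p)! q^(2p). *)
Lemma factor_bound a b q P : 1 < q -> 1 <= P ->
  Rabs a * Rabs b + 2 * (Rabs a + Rabs b) <= P * (4 * (q ^ 2 - 1)) ->
  Rabs ((a - 2 * P) * (b - 2 * P)) <= (2 * P + 1) * (2 * P + 2) * q ^ 2.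
Proof.
  intros Hq HP H. rewrite Rabs_mult.
  assert (Ha : Rabs (a - 2 * P) <= Rabs a + 2 * P).
  { unfold Rminus. rewrite <- (Rabs_right (2 * P)) at 2 by lra.
    rewrite <- (Rabs_Ropp (2 * P)). apply Rabs_triang. }
  assert (Hb : Rabs (b - 2 * P) <= Rabs b + 2 * P).
  { unfold Rminus. rewrite <- (Rabs_right (2 * P)) at 2 by lra.
    rewrite <- (Rabs_Ropp (2 * P)). apply Rabs_triang. }
  pose proof (Rabs_pos a). pose proof (Rabs_pos b).
  apply (Rle_trans _ ((Rabs a + 2 * P) * (Rabs b + 2 * P)));
    [apply Rmult_le_compat; auto; apply Rabs_pos|].
  assert (HAB : Rabs a * Rabs b <= P * (Rabs a * Rabs b)).
  { rewrite <- (Rmult_1_l (Rabs a * Rabs b)) at 1.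
    apply Rmult_le_compat_r; [apply Rmult_le_pos; assumption | exact HP]. }
  assert (P * (Rabs a * Rabs b + 2 * (Rabs a + Rabs b)) <= P * (P * (4 * (q ^ 2 - 1))))
    by (apply Rmult_le_compat_l; lra).
  assert (Hsq : 4 * (P * P) * q ^ 2 <= (2 * P + 1) * (2 * P + 2) * q ^ 2)
    by (apply Rmult_le_compat_r; [apply pow2_ge_0 | nra]).
  replace ((Rabs a + 2 * P) * (Rabs b + 2 * P))
    with (Rabs a * Rabs b + 2 * P * (Rabs a + Rabs b) + 4 * (P * P)) by ring.
  replace (P * (P * (4 * (q ^ 2 - 1)))) with (4 * (P * P) * q ^ 2 - 4 * (P * P)) in * by ring.
  lra.
Qed.

Lemma quadratic_product_growth a b q : 1 < q -> exists C, 0 < C /\ forall p,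
  Rabs (prodd p (fun i => (a - 2 * INR i) * (b - 2 * INR i)))
    <= C * INR (fact (2 * p)) * q ^ (2 * p).
Proof.
  intros Hq.
  set (T := fun p => Rabs (prodd p (fun i => (a - 2 * INR i) * (b - 2 * INR i)))).
  set (F := fun p => INR (fact (2 * p)) * q ^ (2 * p)).
  set (S0 := Rabs a * Rabs b + 2 * (Rabs a + Rabs b)).
  assert (Hq2 : 0 < 4 * (q ^ 2 - 1)) by nra.
  assert (HS0 : 0 <= S0 / (4 * (q ^ 2 - 1))).
  { apply div_nonneg; [|exact Hq2]. pose proof (Rabs_pos a). pose proof (Rabs_pos b).
    pose proof (Rmult_le_pos (Rabs a) (Rabs b)). unfold S0. nra. }
  assert (HF : forall p, 0 < F p)
    by (intros p; apply Rmult_lt_0_compat; [apply INR_fact_lt_0 | apply pow_lt; lra]).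
  (* from index I0 on, factor_bound applies *)
  destruct (INR_unbounded (S0 / (4 * (q ^ 2 - 1)) + 1)) as [I0 HI0].
  destruct (eventually_dominated T F I0) as [C [HC Hdom]].
  - intros p. apply Rabs_pos.
  - exact HF.
  - intros p Hp. apply le_INR in Hp.
    set (X := (2 * INR p + 1) * (2 * INR p + 2) * q ^ 2).
    assert (HFS : F (S p) = F p * X).
    { unfold F, X. rewrite fact_double_succ.
      replace (2 * S p)%nat with (2 * p + 2)%nat by lia. rewrite pow_add. ring. }
    assert (HTS : T (S p) <= T p * X).
    { unfold T. simpl prodd. rewrite Rabs_mult. apply Rmult_le_compat_l; [apply Rabs_pos|].
      apply factor_bound; [exact Hq | lra|]. fold S0.
      apply (Rle_trans _ (S0 / (4 * (q ^ 2 - 1)) * (4 * (q ^ 2 - 1))));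
        [right; field; lra | apply Rmult_le_compat_r; lra]. }
    rewrite HFS. pose proof (HF p).
    replace (T p * (F p * X)) with ((T p * X) * F p) by ring.
    apply Rmult_le_compat_r; lra.
  - exists C. split; [exact HC|]. intros p. specialize (Hdom p). unfold T, F in Hdom. lra.
Qed.

Lemma cp_growth d k al q : 1 < q -> exists C, 0 < C /\ forall p,
  Rabs (cp d k al p) <= C * INR (fact (2 * p)) * q ^ (2 * p).
Proof. apply quadratic_product_growth. Qed.

(* A function continuous on an open set G is bounded on each compact K in G:
   the open sets {y in G : |h y| < n} cover K, and finitely many suffice. *)
Lemma compact_bounded d G K h : open_Rd d G -> compact d K -> (forall x, K x -> G x) ->
  (forall x, G x -> cont_at d h x) ->
  exists M, 0 < M /\ forall x, K x -> Rabs (h x) < M.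
Proof.
  intros HG [_ HK] HKG Hh.
  destruct (HK nat (fun n y => G y /\ Rabs (h y) < INR n)) as [l Hl].
  - intros n x [Hx Hhx] Hxd.
    destruct (HG x Hx Hxd) as [r [Hr Hball]].
    destruct (Hh x Hx (INR n - Rabs (h x))) as [del [Hdel Hc]]; [lra|].
    exists (Rmin r del). split; [apply Rmin_pos; auto|]. intros y Hy Hd.
    pose proof (Rmin_l r del). pose proof (Rmin_r r del).
    split; [apply Hball; auto; lra|].
    specialize (Hc y Hy ltac:(lra)). pose proof (Rabs_triang_inv (h y) (h x)). lra.
  - intros x Hx. destruct (INR_unbounded (Rabs (h x))) as [n Hn].
    exists n. split; [apply HKG, Hx | lra].
  - exists (INR (list_max l) + 1). split; [pose proof (pos_INR (list_max l)); lra|].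
    intros x Hx. destruct (Hl x Hx) as [n [Hin [_ Hhx]]].
    assert (Hle : (n <= list_max l)%nat).
    { pose proof (proj1 (list_max_le l (list_max l)) (Nat.le_refl _)) as Hall.
      rewrite Forall_forall in Hall. apply Hall, Hin. }
    apply le_INR in Hle. lra.
Qed.

Lemma annulus_punctured d r0 r1 x : 0 <= r0 -> annulus d r0 r1 x ->
  punctured d x /\ r0 ^ 2 <= Nf d x.
Proof.
  intros Hr0 [Hx [Hn _]]. split; [split; [exact Hx | lra]|].
  unfold norm in Hn. fold (Nf d x) in Hn.
  rewrite <- (sqrt_sqrt (Nf d x)) by apply Nf_nonneg. simpl. rewrite Rmult_1_r.
  apply Rmult_le_compat; lra.
Qed.

Lemma cabs_le a b : cabs (a, b) <= Rabs a + Rabs b.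
Proof.
  unfold cabs. cbn [fst snd]. pose proof (Rabs_pos a) as Ha. pose proof (Rabs_pos b) as Hb.
  rewrite <- (sqrt_Rsqr (Rabs a + Rabs b)) by lra.
  apply sqrt_le_1; [apply Rplus_le_le_0_compat; apply pow2_ge_0 | apply Rle_0_sqr|].
  replace (a ^ 2 + b ^ 2) with (Rsqr (Rabs a) + Rsqr (Rabs b))
    by (rewrite <- !Rsqr_abs; unfold Rsqr; ring).
  replace (Rsqr (Rabs a + Rabs b))
    with (Rsqr (Rabs a) + Rsqr (Rabs b) + 2 * (Rabs a * Rabs b)) by (unfold Rsqr; ring).
  pose proof (Rmult_le_pos _ _ Ha Hb). lra.
Qed.

Lemma polyharmonic_fin_of_eigen d (f : pt -> R * R) (c : nat -> R) :
  smooth d (re f) (punctured d) -> smooth d (im f) (punctured d) ->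
  (forall p x, punctured d x -> lap_iter d p (re f) x = c p * re f x / Nf d x ^ p) ->
  (forall p x, punctured d x -> lap_iter d p (im f) x = c p * im f x / Nf d x ^ p) ->
  (exists p, c p = 0) -> polyharmonic_fin d f (punctured d).
Proof.
  intros Hre Him Lre Lim [p Hp]. split; [exact Hre|]. split; [exact Him|].
  exists p. intros x Hx. rewrite Lre, Lim, Hp by exact Hx. unfold Rdiv. split; ring.
Qed.

Lemma eigen_term_bound (c n a C0 M F r0 eps : R) p : 0 < r0 -> 0 < eps -> r0 ^ 2 <= n ->
  0 <= a <= M -> Rabs c <= C0 * F * (1 + eps * r0) ^ (2 * p) ->
  Rabs c * a / n ^ p <= C0 * M * F * (1 / r0 + eps) ^ (2 * p).
Proof.
  intros Hr He Hn Ha Hc.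
  assert (Hr2 : 0 < r0 ^ 2) by (apply pow_lt, Hr).
  assert (Hq : (1 / r0 + eps) ^ (2 * p) = (1 + eps * r0) ^ (2 * p) / (r0 ^ 2) ^ p).
  { replace (1 / r0 + eps) with ((1 + eps * r0) / r0) by (field; lra).
    unfold Rdiv. rewrite Rpow_mult_distr, pow_inv, <- pow_mult. reflexivity. }
  assert (Hinv : / n ^ p <= / (r0 ^ 2) ^ p).
  { apply Rinv_le_contravar; [apply pow_lt, Hr2 | apply pow_incr; lra]. }
  assert (Hinv0 : 0 < / n ^ p) by (apply Rinv_0_lt_compat, pow_lt; lra).
  pose proof (Rabs_pos c).
  apply (Rle_trans _ (Rabs c * M * / (r0 ^ 2) ^ p)).
  - unfold Rdiv. apply Rmult_le_compat; [apply Rmult_le_pos; lra | lra | |exact Hinv].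
    apply Rmult_le_compat_l; lra.
  - rewrite Hq. unfold Rdiv.
    replace (C0 * M * F * ((1 + eps * r0) ^ (2 * p) * / (r0 ^ 2) ^ p))
      with (C0 * F * (1 + eps * r0) ^ (2 * p) * (M * / (r0 ^ 2) ^ p)) by ring.
    rewrite Rmult_assoc. apply Rmult_le_compat_r; [|exact Hc].
    apply Rmult_le_pos; [lra | left; apply Rinv_0_lt_compat, pow_lt, Hr2].
Qed.

Lemma polyharmonic_inf_of_eigen d (f : pt -> R * R) (c : nat -> R) r0 r1 : 0 < r0 ->
  smooth d (re f) (punctured d) -> smooth d (im f) (punctured d) ->
  (forall p x, punctured d x -> lap_iter d p (re f) x = c p * re f x / Nf d x ^ p) ->
  (forall p x, punctured d x -> lap_iter d p (im f) x = c p * im f x / Nf d x ^ p) ->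
  (forall q, 1 < q -> exists C, 0 < C /\
     forall p, Rabs (c p) <= C * INR (fact (2 * p)) * q ^ (2 * p)) ->
  polyharmonic_inf d f (annulus d r0 r1) (1 / r0).
Proof.
  intros Hr0 Hre Him Lre Lim Hgrowth.
  assert (Hann : forall x, annulus d r0 r1 x -> punctured d x)
    by (intros x Hx; apply (annulus_punctured d r0 r1 x); [lra | exact Hx]).
  split; [intros n; exact (Ck_mono d n _ _ _ Hann (Hre n))|].
  split; [intros n; exact (Ck_mono d n _ _ _ Hann (Him n))|].
  intros K HK HKA eps Heps.
  destruct (compact_bounded d (punctured d) K (fun x => Rabs (re f x) + Rabs (im f x))
              (punctured_open d) HK (fun x Hx => Hann x (HKA x Hx))) as [M [HM HMb]].
  { intros x Hx. apply cont_plus; apply (cont_comp d _ Rabs); try apply Rcontinuity_abs.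
    - exact (Hre O x Hx).
    - exact (Him O x Hx). }
  destruct (Hgrowth (1 + eps * r0)) as [C0 [HC0 Hc]]; [nra|].
  exists (C0 * M). split; [apply Rmult_lt_0_compat; assumption|].
  intros p x Hx. destruct (annulus_punctured d r0 r1 x ltac:(lra) (HKA x Hx)) as [Hxp HN].
  specialize (HMb x Hx). pose proof (Rabs_pos (re f x)). pose proof (Rabs_pos (im f x)).
  apply (Rle_trans _ _ _ (cabs_le _ _)). rewrite Lre, Lim by exact Hxp.
  assert (Hpos : 0 < Nf d x ^ p) by (apply pow_lt; apply punct_iff in Hxp; tauto).
  replace (Rabs (c p * re f x / Nf d x ^ p) + Rabs (c p * im f x / Nf d x ^ p))
    with (Rabs (c p) * (Rabs (re f x) + Rabs (im f x)) / Nf d x ^ p).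
  - apply eigen_term_bound; auto. rewrite Rabs_right in HMb by lra. lra.
  - unfold Rdiv. rewrite !Rabs_mult, Rabs_inv, (Rabs_right (Nf d x ^ p)) by lra. ring.
Qed.

Theorem mainTheorem2 (d k : nat) (Y : pt -> R * R) (alpha : R) :
  (2 <= d)%nat ->
  harmonic_hom_poly d k Y ->
  (exceptional d k alpha -> polyharmonic_fin d (Hak d alpha Y) (punctured d)) /\
  (~ exceptional d k alpha ->
     forall (r0 : R) (r1 : option R), 0 < r0 -> ext_lt r0 r1 ->
       polyharmonic_inf d (Hak d alpha Y) (annulus d r0 r1) (1 / r0)).
Proof.
  intros _ [Hre [Him Hlap]].
  destruct (radial_harmonic_eigen d k alpha (re Y) Hre (fun x Hx => proj1 (Hlap x Hx)))
    as [Sre Lre].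
  destruct (radial_harmonic_eigen d k alpha (im Y) Him (fun x Hx => proj2 (Hlap x Hx)))
    as [Sim Lim].
  split.
  - intros Hexc.
    exact (polyharmonic_fin_of_eigen d (Hak d alpha Y) _ Sre Sim Lre Lim
             (cp_exceptional d k alpha Hexc)).
  - intros _ r0 r1 Hr0 _.
    exact (polyharmonic_inf_of_eigen d (Hak d alpha Y) _ r0 r1 Hr0 Sre Sim Lre Lim
             (fun q Hq => cp_growth d (INR k) alpha q Hq)).
Qed.
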